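(* Let $m,n\ge0$ be integers and $\lambda$ a bipartition. Then $\lambda$ is almost $(m|n)$-cross if and only if its weight diagram $x_\lambda(m-n)$ has the following form: - every vertex $j\le -m-1$ is labelled $\wedge$; - every vertex $j\ge n+2$ is labelled $\vee$; - the $m+n+2$ vertices $-m,-m+1,\dots,n+1$ carry exactly $m+1$ labels $\times$ and $n+1$ labels $\bigcirc$, in some order.
   Context: A partition is a weakly decreasing sequence $\alpha=(\alpha_1,\alpha_2,\dots)$ of nonnegative integers, almost all zero. A bipartition is a pair $\lambda=(\lambda^\bullet,\lambda^\circ)$ of partitions. Containment is componentwise. A bipartition $\lambda$ is $(m|n)$-cross if there exists $k$ with $0\le k\le m$ such that $\lambda^\bullet_{k+1}+\lambda^\circ_{m-k+1}\le n$. It is almost $(m|n)$-cross if it is not $(m|n)$-cross but every bipartition strictly contained in it is $(m|n)$-cross. Set $I_\wedge(\lambda)=\{\lambda^\bullet_i-(i-1):i\ge1\}$ and $I_\vee(\lambda,\delta)=\{i-\delta-\lambda^\circ_i:i\ge1\}$. The weight diagram $x_\lambda(\delta)$ labels each integer $j$ by: - $\bigcirc$ if $j$ is in neither set; - $\wedge$ if $j$ is only in $I_\wedge(\lambda)$; - $\vee$ if $j$ is only in $I_\vee(\lambda,\delta)$; - $\times$ if $j$ is in both. *)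

From Stdlib Require Import ClassicalDescription.
From mathcomp Require Import all_boot all_order all_algebra.
Set Implicit Arguments. Unset Strict Implicit. Unset Printing Implicit Defensive.
Import Order.TTheory GRing.Theory Num.Theory.

(* A partition alpha = (alpha_1, alpha_2, ...) is encoded 0-based:
   the function a : nat -> nat with  a i = alpha_(i+1). *)
Definition is_partition (a : nat -> nat) : Prop :=
  (forall i, a i.+1 <= a i) /\ (exists N, forall i, N <= i -> a i = 0).

(* A bipartition is a pair (lb, lc) = (lambda^bullet, lambda^circ) of partitions. *)
Definition is_bipartition (lb lc : nat -> nat) : Prop :=
  is_partition lb /\ is_partition lc.

Definition bip_contained (mb mc lb lc : nat -> nat) : Prop :=
  forall i, mb i <= lb i /\ mc i <= lc i.

Definition bip_strictly_contained (mb mc lb lc : nat -> nat) : Prop :=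
  bip_contained mb mc lb lc /\ (exists i, mb i <> lb i \/ mc i <> lc i).

(* (m|n)-cross: exists 0<=k<=m with lambda^bullet_(k+1) + lambda^circ_(m-k+1) <= n *)
Definition is_cross (m n : nat) (lb lc : nat -> nat) : Prop :=
  exists k, k <= m /\ lb k + lc (m - k) <= n.

Definition almost_cross (m n : nat) (lb lc : nat -> nat) : Prop :=
  ~ is_cross m n lb lc /\
  (forall mb mc, is_bipartition mb mc -> bip_strictly_contained mb mc lb lc ->
                 is_cross m n mb mc).

Local Open Scope ring_scope.

(* I_wedge(lambda) = { lambda^bullet_i - (i-1) : i >= 1 } *)
Definition in_Iwedge (lb : nat -> nat) (j : int) : Prop :=
  exists i : nat, j = (lb i)%:Z - i%:Z.

(* I_vee(lambda, delta) = { i - delta - lambda^circ_i : i >= 1 } *)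
Definition in_Ivee (lc : nat -> nat) (delta : int) (j : int) : Prop :=
  exists i : nat, j = (i.+1)%:Z - delta - (lc i)%:Z.

Definition decP (P : Prop) : bool :=
  if excluded_middle_informative P then true else false.

Inductive wlabel := LCirc | LUp | LDown | LCross.

Definition wlabel_eqb (a b : wlabel) : bool :=
  match a, b with
  | LCirc, LCirc | LUp, LUp | LDown, LDown | LCross, LCross => true
  | _, _ => false
  end.

(* The weight diagram x_lambda(delta): the label of vertex j.
   LUp = wedge, LDown = vee, LCross = times, LCirc = circle. *)
Definition weight_diagram (lb lc : nat -> nat) (delta : int) (j : int) : wlabel :=
  match decP (in_Iwedge lb j), decP (in_Ivee lc delta j) with
  | false, false => LCirc
  | true, false => LUp
  | false, true => LDown
  | true, true => LCross
  end.

(* Minimality pins an almost cross bipartition down completely: lowering the rows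
   of lb from row k on to n + 1 - lc_(m-k) (or deleting its rows beyond m) gives a
   smaller bipartition, which must then be cross, and this forces lb and lc to have at
   most m + 1 rows with lb_k + lc_(m-k) = n + 1 for k <= m; conversely such a pair is
   almost cross.  In the weight diagram the points lb_k - k of I_wedge decrease and the
   points of I_vee increase.  The box condition says exactly that the first m + 1
   points of both lie in the window [-m, n + 1] and are the same vertices listed in
   opposite orders, while all later points of I_wedge lie left of the window and those
   of I_vee right of it.  Conversely, the label counts force every window vertex to be
   a cross or a circle; counting crosses bounds the number of rows, and comparing the
   two monotone enumerations of the crosses recovers the box condition. *)

From Pilot Require Import Defs.
From Stdlib Require Import ClassicalDescription.
From mathcomp Require Import all_boot all_order all_algebra zify.
Import Order.TTheory Order.NatMonotonyTheory.
Set Implicit Arguments. Unset Strict Implicit. Unset Printing Implicit Defensive.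

Lemma count_mem_subset (T : eqType) (s t : seq T) :
  uniq s -> uniq t -> {subset t <= s} -> count (mem t) s = size t.
Proof.
move=> s_uniq t_uniq sub_ts; rewrite -size_filter; apply/perm_size/uniq_perm.
- exact: filter_uniq.
- exact: t_uniq.
by move=> x; rewrite mem_filter andb_idr //; apply: sub_ts.
Qed.

Lemma uniq_size_le_count (T : eqType) (P : pred T) (s t : seq T) :
  uniq t -> {subset t <= [pred x in s | P x]} -> size t <= count P s.
Proof.
move=> t_uniq sub_ts; rewrite -size_filter; apply: uniq_leq_size => // x.
by move=> /sub_ts /andP[x_s Px]; rewrite mem_filter Px.
Qed.

Lemma dec_inc_prefix_rev (disp : Order.disp_t) (T : orderType disp) (f g : nat -> T) m :
  (forall k, (f k.+1 < f k)%O) -> (forall i, (g i < g i.+1)%O) ->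
  [seq f k | k <- iota 0 m.+1] =i [seq g i | i <- iota 0 m.+1] ->
  forall k, k <= m -> f k = g (m - k).
Proof.
move=> f_dec g_inc eqFG k le_km.
set F := [seq f k | k <- iota 0 m.+1] in eqFG *.
set G := [seq g i | i <- iota 0 m.+1] in eqFG *.
have sortG : sorted <%O G by apply: homo_sorted (iota_ltn_sorted 0 _); exact: homo_ltn_lt.
have sortF : sorted <%O (rev F).
  rewrite rev_sorted; apply: homo_sorted (iota_ltn_sorted 0 _) => i j.
  exact: nhomo_ltn_lt.
have revFG : rev F = G.
  apply: (sorted_eq lt_trans _ sortF sortG); first by move=> x y; rewrite lt_asym.
  apply: uniq_perm; [exact: sorted_uniq lt_trans ltxx _ sortF | |].
    exact: sorted_uniq lt_trans ltxx _ sortG.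
  by move=> x; rewrite mem_rev eqFG.
have -> : f k = nth (f 0) F k by rewrite (nth_map 0) ?size_iota ?nth_iota.
rewrite -(revK F) revFG nth_rev size_map size_iota //.
by rewrite (nth_map 0) ?size_iota ?nth_iota; [congr g; lia | lia | lia].
Qed.

Lemma partition_nonincr a : is_partition a -> forall i j, i <= j -> a j <= a i.
Proof. by move=> [a_dec _] i j le_ij; rewrite -leEnat; exact: (@nonincnP _ _ a a_dec). Qed.

Lemma partition_eq0 a p : is_partition a -> a p = 0 -> forall i, p <= i -> a i = 0.
Proof. by move=> pa ap0 i /(partition_nonincr pa); rewrite ap0 leqn0 => /eqP. Qed.

Lemma is_cross_swap m n lb lc : is_cross m n lb lc -> is_cross m n lc lb.
Proof. by move=> [k [le_km sum_le]]; exists (m - k); rewrite subKn // leq_subr addnC. Qed.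

Lemma almost_cross_swap m n lb lc : almost_cross m n lb lc -> almost_cross m n lc lb.
Proof.
move=> [not_cross min_cross]; split=> [/is_cross_swap //|mb mc [pb pc] [sub [i neq_i]]].
apply/is_cross_swap/min_cross; first by split.
split; first by move=> j; have [] := sub j.
by exists i; case: neq_i; [right | left].
Qed.

Definition cap_from (k c : nat) (a : nat -> nat) (i : nat) : nat :=
  if k <= i then minn (a i) c else a i.

Lemma is_partition_cap_from k c a : is_partition a -> is_partition (cap_from k c a).
Proof.
move=> [a_dec [N a_eq0]]; split=> [i|].
  by rewrite /cap_from; have := a_dec i; case: ifP; case: ifP => *; lia.
by exists N => i le_Ni; rewrite /cap_from a_eq0 // min0n if_same.
Qed.

Lemma almost_cross_cap_from m n lb lc k c :
  is_bipartition lb lc -> almost_cross m n lb lc -> c < lb k ->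
  is_cross m n (cap_from k c lb) lc.
Proof.
move=> [pb pc] [_ min_cross] lt_c; apply: min_cross.
  by split=> //; apply: is_partition_cap_from.
split=> [i|]; first by split=> //; rewrite /cap_from; case: ifP => // _; apply: geq_minl.
by exists k; left; rewrite /cap_from leqnn; lia.
Qed.

Lemma almost_cross_tail m n lb lc :
  is_bipartition lb lc -> almost_cross m n lb lc -> lb m.+1 = 0.
Proof.
move=> lblc almost; apply/eqP; rewrite -leqn0 leqNgt; apply/negP => lb_gt0.
have [k [le_km]] := almost_cross_cap_from lblc almost lb_gt0.
rewrite /cap_from ifN -?ltnNge ?ltnS // => sum_le.
by case: almost => not_cross _; apply: not_cross; exists k.
Qed.

Lemma almost_cross_row_le m n lb lc k :
  is_bipartition lb lc -> almost_cross m n lb lc -> k <= m -> lb k + lc (m - k) <= n.+1.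
Proof.
move=> lblc almost le_km; rewrite leqNgt; apply/negP => sum_gt.
(* Capping at n.+1 - lc (m - k) lowers row k only if 0 < lb k (truncated
   subtraction); otherwise the roles of lb and lc are exchanged. *)
wlog lbk_gt0 : lb lc k lblc almost le_km sum_gt / 0 < lb k.
  move=> sym; have [lbk0|] := posnP (lb k); last exact: sym lblc almost le_km sum_gt.
  have [pb pc] := lblc.
  apply: (sym lc lb (m - k)); [by split | exact: almost_cross_swap | exact: leq_subr | |].
  - by rewrite subKn // addnC.
  - by rewrite lt0n; apply/eqP => lc0; move: sum_gt; rewrite lbk0 lc0.
have [pb pc] := lblc.
have lt_c : n.+1 - lc (m - k) < lb k by lia.
have [j [le_jm]] := almost_cross_cap_from lblc almost lt_c.
case: almost => not_cross _; rewrite /cap_from => sum_le; apply: not_cross.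
exists j; split=> //; move: sum_le; case: (leqP k j) => // le_kj sum_le.
have : lc (m - k) <= lc (m - j) by apply: partition_nonincr => //; lia.
lia.
Qed.

(* lb together with lc turned by a half turn tiles the (m + 1) x (n + 1) box. *)
Definition box_complement (m n : nat) (lb lc : nat -> nat) : Prop :=
  [/\ lb m.+1 = 0, lc m.+1 = 0 & forall k, k <= m -> lb k + lc (m - k) = n.+1].

Lemma almost_cross_box_complement m n lb lc : is_bipartition lb lc ->
  almost_cross m n lb lc <-> box_complement m n lb lc.
Proof.
move=> lblc; have [pb pc] := lblc; split=> [almost | [lb_tail lc_tail row_sum]].
  split; [exact: almost_cross_tail lblc almost | |].
    by apply: almost_cross_tail (almost_cross_swap almost); split.
  move=> k le_km; apply/eqP; rewrite eqn_leq almost_cross_row_le //= ltnNge.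
  by apply/negP => sum_le; case: almost => not_cross _; apply: not_cross; exists k.
split=> [[k [le_km]]|mb mc _ [sub [i neq_i]]]; first by rewrite row_sum // ltnn.
have [le_mb le_mc] := sub i.
have lb_eq0 := partition_eq0 pb lb_tail; have lc_eq0 := partition_eq0 pc lc_tail.
have le_im : i <= m.
  rewrite leqNgt; apply/negP => lt_mi.
  by have := lb_eq0 i lt_mi; have := lc_eq0 i lt_mi; case: neq_i; lia.
have [le_mb' le_mc'] := sub (m - i).
have := row_sum i le_im; have := row_sum (m - i) (leq_subr i m); rewrite subKn //.
by case: neq_i => neq; [exists i | exists (m - i)]; rewrite ?subKn //; lia.
Qed.

Local Open Scope ring_scope.

Definition wedge_at (lb : nat -> nat) (k : nat) : int := (lb k)%:Z - k%:Z.
Definition vee_at (lc : nat -> nat) (delta : int) (i : nat) : int :=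
  (i.+1)%:Z - delta - (lc i)%:Z.

Definition wedge_prefix (lb : nat -> nat) (m : nat) : seq int :=
  [seq wedge_at lb k | k <- iota 0 m.+1].
Definition vee_prefix (lc : nat -> nat) (delta : int) (m : nat) : seq int :=
  [seq vee_at lc delta i | i <- iota 0 m.+1].

Lemma wedge_at_decr lb : is_partition lb -> forall k, wedge_at lb k.+1 < wedge_at lb k.
Proof. by move=> [lb_dec _] k; have := lb_dec k; rewrite /wedge_at; lia. Qed.

Lemma vee_at_incr lc delta : is_partition lc -> forall i, vee_at lc delta i < vee_at lc delta i.+1.
Proof. by move=> [lc_dec _] i; have := lc_dec i; rewrite /vee_at; lia. Qed.

Lemma wedge_at_inj lb : is_partition lb -> injective (wedge_at lb).
Proof. by move=> pb; apply/dec_inj/decnP/wedge_at_decr. Qed.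

Lemma vee_at_inj lc delta : is_partition lc -> injective (vee_at lc delta).
Proof. by move=> pc; apply/inc_inj/incnP/vee_at_incr. Qed.

Lemma vee_at_eq_wedge_at m n lb lc k : (k <= m)%N ->
  vee_at lc (m%:Z - n%:Z) (m - k) = wedge_at lb k <-> (lb k + lc (m - k))%N = n.+1.
Proof. by move=> le_km; rewrite /vee_at /wedge_at; split; lia. Qed.

Lemma decPP (P : Prop) : reflect P (Defs.decP P).
Proof. by rewrite /Defs.decP; case: excluded_middle_informative => p; constructor. Qed.

Lemma wlabel_eqbP (a b : wlabel) : reflect (a = b) (wlabel_eqb a b).
Proof. by case: a; case: b; constructor. Qed.

Section Labels.
Variables (lb lc : nat -> nat) (delta j : int).

Lemma weight_diagram_cross :
  weight_diagram lb lc delta j = LCross <-> in_Iwedge lb j /\ in_Ivee lc delta j.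
Proof. by rewrite /weight_diagram; case: decPP => ?; case: decPP => ?; intuition. Qed.

Lemma weight_diagram_circ :
  weight_diagram lb lc delta j = LCirc <-> ~ in_Iwedge lb j /\ ~ in_Ivee lc delta j.
Proof. by rewrite /weight_diagram; case: decPP => ?; case: decPP => ?; intuition. Qed.

Lemma weight_diagram_up :
  weight_diagram lb lc delta j = LUp <-> in_Iwedge lb j /\ ~ in_Ivee lc delta j.
Proof. by rewrite /weight_diagram; case: decPP => ?; case: decPP => ?; intuition. Qed.

Lemma weight_diagram_down :
  weight_diagram lb lc delta j = LDown <-> ~ in_Iwedge lb j /\ in_Ivee lc delta j.
Proof. by rewrite /weight_diagram; case: decPP => ?; case: decPP => ?; intuition. Qed.

End Labels.

Definition window (m n : nat) : seq int := [seq x%:Z - m%:Z | x <- iota 0 (m + n).+2].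

Lemma mem_window m n j : (j \in window m n) = (- m%:Z <= j <= n.+1%:Z).
Proof.
apply/mapP/idP => [[x] | /andP[lo hi]]; first by rewrite mem_iota => /andP[_ ?] ->; lia.
by exists (absz (j + m%:Z)); [rewrite mem_iota; lia | lia].
Qed.

Lemma window_uniq m n : uniq (window m n).
Proof. by rewrite map_inj_uniq ?iota_uniq // => x y; lia. Qed.

Lemma size_window m n : size (window m n) = (m + n).+2.
Proof. by rewrite size_map size_iota. Qed.

Lemma count_window m n (P : pred int) :
  count P (window m n) = count (fun x : nat => P (x%:Z - m%:Z)) (iota 0 (m + n).+2).
Proof. exact: count_map. Qed.

Definition weight_diagram_shape (m n : nat) (lb lc : nat -> nat) : Prop :=
  let x := weight_diagram lb lc (m%:Z - n%:Z) in
  [/\ forall j, j <= - (m.+1)%:Z -> x j = LUp,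
      forall j, (n.+2)%:Z <= j -> x j = LDown,
      count (fun j => wlabel_eqb (x j) LCross) (window m n) = m.+1
    & count (fun j => wlabel_eqb (x j) LCirc) (window m n) = n.+1].

Section BoxComplementShape.

Variables (m n : nat) (lb lc : nat -> nat).
Hypotheses (pb : is_partition lb) (pc : is_partition lc).
Hypothesis box : box_complement m n lb lc.

Lemma box_in_Iwedge j :
  in_Iwedge lb j <-> j <= - (m.+1)%:Z \/ j \in wedge_prefix lb m.
Proof.
have [lb_tail _ _] := box; have lb_eq0 := partition_eq0 pb lb_tail.
split=> [[k ->] | [le_jm | /mapP[k _ ->]]]; last by exists k.
  have [le_km | lt_mk] := leqP k m; last by left; rewrite /wedge_at lb_eq0 //; lia.
  by right; apply/mapP; exists k; rewrite ?mem_iota.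
by exists (absz j); rewrite lb_eq0; lia.
Qed.

Lemma box_in_Ivee j :
  in_Ivee lc (m%:Z - n%:Z) j <-> (n.+2)%:Z <= j \/ j \in wedge_prefix lb m.
Proof.
have [_ lc_tail row_sum] := box; have lc_eq0 := partition_eq0 pc lc_tail.
split=> [[i ->] | [le_nj | /mapP[k]]].
- have [le_im | lt_mi] := leqP i m; last by left; rewrite lc_eq0 //; lia.
  right; apply/mapP; exists (m - i)%N; first by rewrite mem_iota; lia.
  by have := row_sum (m - i)%N (leq_subr i m); rewrite subKn // /wedge_at; lia.
- by exists (absz (j + m%:Z - n%:Z - 1)%R); rewrite lc_eq0; lia.
rewrite mem_iota => /andP[_ le_km] ->; exists (m - k)%N.
by have := row_sum k le_km; rewrite /wedge_at; lia.
Qed.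

Lemma box_weight_diagram_window j : j \in window m n ->
  weight_diagram lb lc (m%:Z - n%:Z) j = if j \in wedge_prefix lb m then LCross else LCirc.
Proof.
rewrite mem_window => /andP[lo hi]; case: ifP => j_pref.
  by apply/weight_diagram_cross; rewrite box_in_Iwedge box_in_Ivee; split; right.
apply/weight_diagram_circ; rewrite box_in_Iwedge box_in_Ivee j_pref.
split=> -[|//]; lia.
Qed.

Lemma box_weight_diagram_shape : weight_diagram_shape m n lb lc.
Proof.
have [_ _ row_sum] := box.
have pref_window : {subset wedge_prefix lb m <= window m n}.
  move=> x /mapP[k]; rewrite mem_iota mem_window => /andP[_ le_km] ->.
  by have := row_sum k le_km; rewrite /wedge_at; lia.
have pref_uniq : uniq (wedge_prefix lb m).
  by rewrite map_inj_uniq ?iota_uniq //; apply: wedge_at_inj.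
have count_pref : count (mem (wedge_prefix lb m)) (window m n) = m.+1.
  by rewrite count_mem_subset ?window_uniq // size_map size_iota.
split.
- move=> j le_jm; apply/weight_diagram_up; rewrite box_in_Iwedge box_in_Ivee.
  by split; [left | case=> [|/pref_window]; rewrite ?mem_window; lia].
- move=> j le_nj; apply/weight_diagram_down; rewrite box_in_Iwedge box_in_Ivee.
  by split; [case=> [|/pref_window]; rewrite ?mem_window; lia | left].
- rewrite -count_pref; apply: eq_in_count => j /box_weight_diagram_window ->.
  by case: ifP.
have := count_predC (mem (wedge_prefix lb m)) (window m n).
rewrite count_pref size_window (@eq_in_count _ _ (predC (mem (wedge_prefix lb m)))).
  by move=> ?; lia.
by move=> j /box_weight_diagram_window ->; case: ifP => /= ->.
Qed.

End BoxComplementShape.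

Section ShapeBoxComplement.

Variables (m n : nat) (lb lc : nat -> nat).
Hypotheses (pb : is_partition lb) (pc : is_partition lc).
Hypothesis shape : weight_diagram_shape m n lb lc.

Lemma shape_window_wedge_vee j : j \in window m n ->
  in_Iwedge lb j <-> in_Ivee lc (m%:Z - n%:Z) j.
Proof.
have [_ _ count_cross count_circ] := shape.
pose has_label L j := wlabel_eqb (weight_diagram lb lc (m%:Z - n%:Z) j) L.
have cross_or_circ : all (predU (has_label LCross) (has_label LCirc)) (window m n).
  rewrite all_count; apply/eqP.
  have := count_predUI (has_label LCross) (has_label LCirc) (window m n).
  rewrite count_cross count_circ size_window.
  rewrite (@eq_count _ (predI (has_label LCross) (has_label LCirc)) pred0) ?count_pred0.
    by move=> ?; lia.
  by move=> i; rewrite /has_label /=; case: weight_diagram.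
move=> /(allP cross_or_circ) /orP[] /wlabel_eqbP.
  by move=> /weight_diagram_cross; tauto.
by move=> /weight_diagram_circ; tauto.
Qed.

Lemma shape_wedge_at_le k : wedge_at lb k <= n.+1%:Z.
Proof.
have [_ down _ _] := shape; rewrite leNgt; apply/negP => /down/weight_diagram_down[].
by case; exists k.
Qed.

Lemma shape_vee_at_ge i : - m%:Z <= vee_at lc (m%:Z - n%:Z) i.
Proof.
have [up _ _ _] := shape; rewrite leNgt; apply/negP => lt_vm.
have /up/weight_diagram_up[_ []] : vee_at lc (m%:Z - n%:Z) i <= - (m.+1)%:Z by lia.
by exists i.
Qed.

Lemma shape_window_wedges_size (t : seq int) : uniq t ->
  (forall j, j \in t -> j \in window m n /\ in_Iwedge lb j) -> (size t <= m.+1)%N.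
Proof.
have [_ _ count_cross _] := shape.
move=> t_uniq t_wedges; rewrite -count_cross; apply: uniq_size_le_count => // j.
move=> /t_wedges[j_win j_wedge]; rewrite inE j_win /=.
by apply/wlabel_eqbP/weight_diagram_cross; split; last exact/shape_window_wedge_vee.
Qed.

Lemma shape_lb_tail : lb m.+1 = 0%N.
Proof.
apply/eqP; rewrite -leqn0 leqNgt; apply/negP => lb_gt0.
suff : (m.+2 <= m.+1)%N by rewrite ltnn.
rewrite -[m.+2](size_iota 0) -(size_map (wedge_at lb)); apply: shape_window_wedges_size.
  by rewrite map_inj_uniq ?iota_uniq //; apply: wedge_at_inj.
move=> x /mapP[k]; rewrite mem_iota /= => lt_km ->; split; last by exists k.
rewrite mem_window shape_wedge_at_le andbT.
have : (lb m.+1 <= lb k)%N by apply: partition_nonincr.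
by rewrite /wedge_at; lia.
Qed.

Lemma shape_lc_tail : lc m.+1 = 0%N.
Proof.
apply/eqP; rewrite -leqn0 leqNgt; apply/negP => lc_gt0.
suff : (m.+2 <= m.+1)%N by rewrite ltnn.
rewrite -[m.+2](size_iota 0) -(size_map (vee_at lc (m%:Z - n%:Z))).
apply: shape_window_wedges_size.
  by rewrite map_inj_uniq ?iota_uniq //; apply: vee_at_inj.
move=> x /mapP[i]; rewrite mem_iota /= => lt_im ->.
have vee_win : vee_at lc (m%:Z - n%:Z) i \in window m n.
  rewrite mem_window shape_vee_at_ge /=.
  have : (lc m.+1 <= lc i)%N by apply: partition_nonincr.
  by rewrite /vee_at; lia.
by split; last by apply/shape_window_wedge_vee; last exists i.
Qed.

Lemma shape_mem_wedge_prefix j :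
  j \in wedge_prefix lb m <-> j \in window m n /\ in_Iwedge lb j.
Proof.
split=> [/mapP[k] | [j_win [k j_eq]]].
  rewrite mem_iota => /andP[_ le_km] ->; split; last by exists k.
  by rewrite mem_window shape_wedge_at_le andbT /wedge_at; lia.
apply/mapP; exists k => //; rewrite mem_iota /= ltnS leqNgt; apply/negP => lt_mk.
move: j_win; rewrite mem_window j_eq (partition_eq0 pb shape_lb_tail) //; lia.
Qed.

Lemma shape_mem_vee_prefix j : j \in vee_prefix lc (m%:Z - n%:Z) m <->
  j \in window m n /\ in_Ivee lc (m%:Z - n%:Z) j.
Proof.
split=> [/mapP[i] | [j_win [i j_eq]]].
  rewrite mem_iota => /andP[_ le_im] ->; split; last by exists i.
  by rewrite mem_window shape_vee_at_ge /vee_at; lia.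
apply/mapP; exists i => //; rewrite mem_iota /= ltnS leqNgt; apply/negP => lt_mi.
move: j_win; rewrite mem_window j_eq (partition_eq0 pc shape_lc_tail) //; lia.
Qed.

Lemma shape_box_complement : box_complement m n lb lc.
Proof.
split=> [||k le_km]; [exact: shape_lb_tail | exact: shape_lc_tail |].
apply/(vee_at_eq_wedge_at n lb lc le_km)/esym.
apply: (dec_inc_prefix_rev (wedge_at_decr pb) (vee_at_incr _ pc)) => // j.
apply/idP/idP => [/shape_mem_wedge_prefix[j_win] | /shape_mem_vee_prefix[j_win]].
  by move=> /(shape_window_wedge_vee j_win) j_vee; apply/shape_mem_vee_prefix.
by move=> /(shape_window_wedge_vee j_win) j_wedge; apply/shape_mem_wedge_prefix.
Qed.

End ShapeBoxComplement.

Lemma weight_diagram_shape_box_complement m n lb lc : is_bipartition lb lc ->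
  weight_diagram_shape m n lb lc <-> box_complement m n lb lc.
Proof.
by move=> [pb pc]; split; [apply: shape_box_complement | apply: box_weight_diagram_shape].
Qed.

Unset Implicit Arguments.
Theorem proposition2p7 (m n : nat) (lb lc : nat -> nat) :
  is_bipartition lb lc ->
  (almost_cross m n lb lc <->
   [/\ (forall j : int, j <= - (m.+1)%:Z ->
          weight_diagram lb lc (m%:Z - n%:Z) j = LUp),
       (forall j : int, (n.+2)%:Z <= j ->
          weight_diagram lb lc (m%:Z - n%:Z) j = LDown),
       count (fun k : nat => wlabel_eqb
                (weight_diagram lb lc (m%:Z - n%:Z) (k%:Z - m%:Z)) LCross)
             (iota 0 (m + n).+2) = m.+1 :> nat
     & count (fun k : nat => wlabel_eqb
                (weight_diagram lb lc (m%:Z - n%:Z) (k%:Z - m%:Z)) LCirc)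
             (iota 0 (m + n).+2) = n.+1 :> nat]).
Proof.
move=> lblc; rewrite (almost_cross_box_complement m n lblc).
rewrite -(weight_diagram_shape_box_complement m n lblc) /weight_diagram_shape.
by rewrite !count_window.
Qed.
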